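(* Let $F$ be any VSCC (over linear profiles) satisfying Coherent Defeat and Tolerant Positive Involvement. Then $F(\mathbf P)\subseteq SC(\mathbf P)$ for every profile $\mathbf P$, where $SC$ is the Split Cycle VSCC.
   Context: Profiles: $\mathbf P:V\to\mathcal L(X)$ with $V$ a nonempty finite set of voters, $X=X(\mathbf P)$ a nonempty finite set of candidates (from fixed infinite sets), $\mathcal L(X)$ the strict linear orders on $X$. $\mathrm{Margin}_{\mathbf P}(x,y)$ = #voters ranking $x$ above $y$ minus #ranking $y$ above $x$; $x$ is majority preferred to $y$ if it is $>0$. Majority path from $x_1$ to $x_n$: $(x_1,\dots,x_n)$ with all $\mathrm{Margin}_{\mathbf P}(x_i,x_{i+1})>0$; strength = minimum of these margins. $(x,y)\in sc(\mathbf P)$ iff $\mathrm{Margin}_{\mathbf P}(x,y)>0$ and it exceeds the strength of every majority path from $y$ to $x$; $SC(\mathbf P)=\{y: \text{no } x \text{ with } (x,y)\in sc(\mathbf P)\}$. A VSCC is $F$ with $\varnothing\ne F(\mathbf P)\subseteq X(\mathbf P)$ for all profiles. Coherent Defeat: if $\mathrm{Margin}_{\mathbf P}(x,y)>0$ and there is no majority path from $y$ to $x$, then $y\notin F(\mathbf P)$. Tolerant Positive Involvement: if $x\in F(\mathbf P)$ and $\mathbf P'$ is obtained from $\mathbf P$ by adding one new voter who ranks $x$ above every other candidate $y$ such that $x$ is not majority preferred to $y$ in $\mathbf P$, then $x\in F(\mathbf P')$. *)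

From HB Require Import structures.
From mathcomp Require Import all_boot all_order all_algebra.
From mathcomp Require Import finmap.
Set Implicit Arguments. Unset Strict Implicit. Unset Printing Implicit Defensive.
Import Order.TTheory GRing.Theory Num.Theory.
Local Open Scope fset_scope.
Local Open Scope fmap_scope.

(* Voters and candidates are drawn from the fixed infinite set nat.  A ballot lists the candidates from top to bottom; the
   listing of a strict linear order on a finite set is unique, so a ballot
   is exactly a strict linear order on X (enforced by [valid_profile]). *)
Definition profile := ({fmap nat -> seq nat} * {fset nat})%type.

Definition voters (P : profile) : {fset nat} := domf P.1.
Definition cands (P : profile) : {fset nat} := P.2.
Definition ballot (P : profile) (v : nat) : seq nat := odflt [::] P.1.[? v].

Definition valid_profile (P : profile) : bool :=
  [&& voters P != fset0, cands P != fset0 &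
      all (fun v => perm_eq (ballot P v) (enum_fset (cands P)))
          (enum_fset (voters P))].

Definition ranks_above (P : profile) (v x y : nat) : bool :=
  index x (ballot P v) < index y (ballot P v).

Definition margin (P : profile) (x y : nat) : int :=
  (count (fun v => ranks_above P v x y) (enum_fset (voters P)))%:Z
  - (count (fun v => ranks_above P v y x) (enum_fset (voters P)))%:Z.

Definition maj_pref (P : profile) (x y : nat) : bool := (0 < margin P x y)%R.

Definition majority_path (P : profile) (a : nat) (s : seq nat) (b : nat) : Prop :=
  [/\ s <> [::], last a s = b, all (fun c => c \in cands P) (a :: s)
    & path (maj_pref P) a s].

Fixpoint strength (P : profile) (a : nat) (s : seq nat) : int :=
  match s with
  | [::] => 0%R
  | [:: b] => margin P a b
  | b :: s' => Num.min (margin P a b) (strength P b s')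
  end.

Definition sc (P : profile) (x y : nat) : Prop :=
  (0 < margin P x y)%R /\
  forall s, majority_path P y s x -> (strength P y s < margin P x y)%R.

Definition in_SC (P : profile) (y : nat) : Prop :=
  y \in cands P /\ ~ (exists x, sc P x y).

Definition VSCC (F : profile -> {fset nat}) : Prop :=
  forall P, valid_profile P -> F P != fset0 /\ F P `<=` cands P.

Definition coherent_defeat (F : profile -> {fset nat}) : Prop :=
  forall P x y, valid_profile P -> x \in cands P -> y \in cands P ->
    maj_pref P x y -> ~ (exists s, majority_path P y s x) -> y \notin F P.

Definition add_voter (P : profile) (i : nat) (b : seq nat) : profile :=
  (P.1.[i <- b], P.2).

Definition tolerant_positive_involvement (F : profile -> {fset nat}) : Prop :=
  forall P x i b, valid_profile P -> x \in F P ->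
    i \notin voters P -> perm_eq b (enum_fset (cands P)) ->
    (forall y, y \in cands P -> y != x -> ~~ maj_pref P x y ->
       index x b < index y b) ->
    x \in F (add_voter P i b).

(* Suppose y is chosen by F at P although x defeats y in Split Cycle with margin m.
   Let A be the set of candidates that y reaches by a majority path of strength at
   least m; then x is not in A, and every edge leaving A has margin less than m.
   Add, one at a time, voters who put the candidates outside A that y beats first,
   then y, then the rest of the complement of A, then A.  Tolerant Positive
   Involvement keeps y chosen, each new voter lowers Margin(x, y) by one, and the
   edges leaving A stay below Margin(x, y).  Once Margin(x, y) is 1 or 2, parity
   of margins forbids any majority edge leaving A, so there is no majority path
   from y to x and Coherent Defeat rejects y: a contradiction. *)
From HB Require Import structures.
From mathcomp Require Import all_boot all_order all_algebra.
From mathcomp Require Import finmap.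
From mathcomp Require Import zify boolp.
Set Implicit Arguments. Unset Strict Implicit. Unset Printing Implicit Defensive.
Local Open Scope fset_scope.
Import Order.TTheory GRing.Theory Num.Theory.

Section Profiles.

Variable P : profile.

Lemma margin_xx c : margin P c c = 0%R.
Proof. rewrite /margin; lia. Qed.

Lemma marginC c d : margin P d c = (- margin P c d)%R.
Proof. rewrite /margin; lia. Qed.

Hypothesis vP : valid_profile P.

Lemma mem_ballot v c : v \in voters P -> c \in cands P -> c \in ballot P v.
Proof.
case/and3P: vP => _ _ /allP perm_ballot vV cC.
by rewrite (perm_mem (perm_ballot v vV)).
Qed.

Lemma margin_count c d : c \in cands P -> d \in cands P -> c != d ->
  margin P c d =
  (2 * (count (fun v => ranks_above P v c d) (enum_fset (voters P)))%:Z
   - (size (enum_fset (voters P)))%:Z)%R.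
Proof.
move=> cC dC cd.
suff split_voters : (count (fun v => ranks_above P v c d) (enum_fset (voters P)) +
   count (fun v => ranks_above P v d c) (enum_fset (voters P)))%N
  = size (enum_fset (voters P)) by rewrite /margin; lia.
rewrite -count_predUI -[RHS]count_predT.
have -> : count (predI (fun v => ranks_above P v c d) (fun v => ranks_above P v d c))
    (enum_fset (voters P)) = 0%N.
  apply/eqP; rewrite -leqn0 leqNgt -has_count.
  by apply/hasP=> -[v _ /andP[]]; rewrite /ranks_above; lia.
rewrite addn0; apply: eq_in_count => v vV /=; rewrite /ranks_above.
have [//|//|same_index] := ltngtP.
by have := index_inj 0 (mem_ballot vV cC) (mem_ballot vV dC) same_index; move/eqP: cd.
Qed.

Lemma margin_gt0_cand c d : (0 < margin P c d)%R -> c \in cands P.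
Proof.
case/and3P: vP => _ _ /allP perm_ballot pos.
have : (0 < count (fun v => ranks_above P v c d) (enum_fset (voters P)))%N.
  by move: pos; rewrite /margin; lia.
rewrite -has_count => /hasP [v vV]; rewrite /ranks_above => above.
rewrite -(perm_mem (perm_ballot v vV)) -index_mem.
exact: leq_trans above (index_size _ _).
Qed.

End Profiles.

Lemma exists_fresh_voter (V : {fset nat}) : exists i, i \notin V.
Proof.
exists (\max_(v <- enum_fset V) v).+1; apply/negP => iV.
by have := @leq_bigmax_seq _ _ xpredT id _ iV isT; rewrite ltnn.
Qed.

Section AddVoter.

Variables (P : profile) (i : nat) (b : seq nat).
Hypothesis iP : i \notin voters P.

Lemma voters_add_voter : voters (add_voter P i b) = i |` voters P.
Proof. exact: dom_setf. Qed.

Lemma ballot_add_voter v :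
  ballot (add_voter P i b) v = if v == i then b else ballot P v.
Proof. by rewrite /ballot /add_voter /= fnd_set; case: (v == i). Qed.

Lemma valid_add_voter : valid_profile P -> perm_eq b (enum_fset (cands P)) ->
  valid_profile (add_voter P i b).
Proof.
case/and3P=> _ cands_nonempty /allP perm_ballot b_perm.
apply/and3P; split => //; rewrite voters_add_voter.
  by apply/eqP=> V0; have := fset1U1 i (voters P); rewrite V0 in_fset0.
apply/allP => v; rewrite in_fset1U ballot_add_voter.
by case: eqP => [-> //|_ /= /perm_ballot].
Qed.

Lemma margin_add_voter c d : c \in b -> d \in b -> c != d ->
  margin (add_voter P i b) c d =
  (margin P c d + (if (index c b < index d b)%N then 1 else -1))%R.
Proof.
move=> cb db cd.
have enum_add : perm_eq (enum_fset (i |` voters P)) (i :: enum_fset (voters P)).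
  apply: uniq_perm; rewrite /= ?fset_uniq ?andbT // => z.
  by rewrite inE in_fset1 inE.
have old_voters e e' : count (fun v => ranks_above (add_voter P i b) v e e')
    (enum_fset (voters P)) = count (fun v => ranks_above P v e e') (enum_fset (voters P)).
  apply: eq_in_count => v vP; rewrite /ranks_above ballot_add_voter.
  by case: eqP vP => // ->; rewrite (negbTE iP).
rewrite /margin voters_add_voter !(permP enum_add) /= !old_voters.
rewrite /ranks_above !ballot_add_voter eqxx.
have [||same_index] := ltngtP (index c b) (index d b); [lia | lia |].
by have := index_inj 0 cb db same_index; move/eqP: cd.
Qed.

End AddVoter.

Lemma index_sort_key (key : nat -> nat) (s : seq nat) c d :
  c \in s -> d \in s -> (key c < key d)%N ->
  (index c (sort (relpre key leq) s) < index d (sort (relpre key leq) s))%N.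
Proof.
move=> cs ds key_lt; set t := sort _ s.
have sorted_t : sorted (relpre key leq) t.
  by apply: sort_sorted => u v; exact: leq_total.
rewrite ltnNge; apply/negP.
move/(sorted_leq_index (fun y x z => @leq_trans (key y) (key x) (key z))
  (fun z => leqnn (key z)) sorted_t); rewrite !mem_sort => /(_ ds cs).
by rewrite /= leqNgt key_lt.
Qed.

Section MajorityPaths.

Variable P : profile.

Lemma strength_rcons (m : int) a s c : s <> [::] ->
  (m <= strength P a (rcons s c))%R =
  (m <= strength P a s)%R && (m <= margin P (last a s) c)%R.
Proof.
elim: s a => [//|b [|b' s] IH] a _; first by rewrite /= le_min.
have strength_cons e f t : strength P e [:: f, b' & t] =
    Num.min (margin P e f) (strength P f (b' :: t)) by [].
by rewrite rcons_cons rcons_cons -rcons_cons !strength_cons !le_min IH // andbA.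
Qed.

Lemma majority_path_rcons a s b c : majority_path P a s b ->
  c \in cands P -> maj_pref P b c -> majority_path P a (rcons s c) c.
Proof.
case=> s0 sb s_cands s_path cC bc; split.
- by case: (s).
- by rewrite last_rcons.
- by rewrite -rcons_cons all_rcons cC s_cands.
- by rewrite rcons_path s_path sb.
Qed.

Lemma majority_path_exit (A : pred nat) a s b : majority_path P a s b ->
  A a -> ~~ A b ->
  exists u v, [/\ u \in cands P, v \in cands P, A u, ~~ A v & maj_pref P u v].
Proof.
case=> _ <- /= /andP[+ +]; elim: s a => [|c s IH] a aC /=; first by move=> _ _ ->.
case/andP=> cC s_cands /andP[ac s_path] Aa.
have [Ac|nAc] := boolP (A c); first exact: IH.
by exists a, c.
Qed.

End MajorityPaths.

Definition strongly_reaches (P : profile) (m : int) (y c : nat) : Prop :=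
  c = y \/ exists s, majority_path P y s c /\ (m <= strength P y s)%R.

Lemma strongly_reaches_step P m y a c : (0 < m)%R -> y \in cands P ->
  strongly_reaches P m y a -> c \in cands P -> (m <= margin P a c)%R ->
  strongly_reaches P m y c.
Proof.
move=> m_gt0 yP [-> | [s [ys strong]]] cP mac; right.
  exists [:: c]; split => //; split=> //=; first by rewrite yP cP.
  by rewrite andbT /maj_pref (lt_le_trans m_gt0 mac).
have [s0 ya _ _] := ys.
exists (rcons s c); split.
  by apply: majority_path_rcons ys cP _; rewrite /maj_pref (lt_le_trans m_gt0 mac).
by rewrite strength_rcons // strong ya mac.
Qed.

Definition leaving_margins_below (Q : profile) (A : pred nat) (m : int) : Prop :=
  forall a c, a \in cands Q -> c \in cands Q -> A a -> ~~ A c -> (margin Q a c < m)%R.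

Lemma no_majority_edge_leaving Q A x y : valid_profile Q ->
  x \in cands Q -> y \in cands Q -> x != y ->
  (margin Q x y <= 2)%R -> leaving_margins_below Q A (margin Q x y) ->
  forall u v, u \in cands Q -> v \in cands Q -> A u -> ~~ A v -> ~~ maj_pref Q u v.
Proof.
move=> vQ xQ yQ xy mxy_le2 below u v uQ vQ' Au nAv; apply/negP => uv_pref.
have uv : u != v by apply: contraTneq uv_pref => ->; rewrite /maj_pref margin_xx.
have := below u v uQ vQ' Au nAv.
move: uv_pref mxy_le2.
rewrite /maj_pref (margin_count vQ uQ vQ' uv) (margin_count vQ xQ yQ xy).
lia.
Qed.

Section CutBallot.

Variables (Q : profile) (A : pred nat) (y : nat).
Hypothesis Ay : A y.

Definition cut_key (c : nat) : nat :=
  if ~~ A c && maj_pref Q y c then 0 else if c == y then 1 else if ~~ A c then 2 else 3.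

Definition cut_ballot : seq nat := sort (relpre cut_key leq) (enum_fset (cands Q)).

Lemma perm_cut_ballot : perm_eq cut_ballot (enum_fset (cands Q)).
Proof. by rewrite /cut_ballot perm_sort. Qed.

Lemma mem_cut_ballot c : c \in cut_ballot = (c \in cands Q).
Proof. by rewrite mem_sort. Qed.

Lemma index_cut_ballot c d : c \in cands Q -> d \in cands Q ->
  (cut_key c < cut_key d)%N -> (index c cut_ballot < index d cut_ballot)%N.
Proof. exact: index_sort_key. Qed.

Lemma cut_key_y : cut_key y = 1%N.
Proof. by rewrite /cut_key Ay /= eqxx. Qed.

Lemma cut_ballot_tolerant z : y \in cands Q -> z \in cands Q -> z != y ->
  ~~ maj_pref Q y z -> (index y cut_ballot < index z cut_ballot)%N.
Proof.
move=> yQ zQ zy nyz; apply: index_cut_ballot => //.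
by rewrite cut_key_y /cut_key (negbTE zy) (negbTE nyz) andbF; case: (A z).
Qed.

Variable i : nat.
Hypothesis iQ : i \notin voters Q.

Lemma margin_cut_ballot a c : a \in cands Q -> c \in cands Q -> A a -> ~~ A c ->
  margin (add_voter Q i cut_ballot) a c =
  (margin Q a c + (if (a == y) && ~~ maj_pref Q y c then 1 else -1))%R.
Proof.
move=> aQ cQ Aa nAc.
have ac : a != c by apply: contraNneq nAc => <-.
have cy : c != y by apply: contraNneq nAc => ->.
rewrite margin_add_voter ?mem_cut_ballot //.
have [ay|ay] := eqVneq a y; last first.
  rewrite ifN //= -leqNgt ltnW // index_cut_ballot //.
  by rewrite /cut_key Aa (negbTE ay) nAc (negbTE cy); case: maj_pref.
subst a => /=; case: (boolP (maj_pref Q y c)) => [yc|nyc].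
  by rewrite ifN // -leqNgt ltnW // index_cut_ballot // cut_key_y /cut_key nAc yc.
by rewrite ifT // index_cut_ballot // cut_key_y /cut_key nAc (negbTE nyc) (negbTE cy).
Qed.

End CutBallot.

Section Involvement.

Variable F : profile -> {fset nat}.
Hypotheses (F_CD : coherent_defeat F) (F_TPI : tolerant_positive_involvement F).
Variables (A : pred nat) (x y : nat).
Hypotheses (Ay : A y) (nAx : ~~ A x).

Lemma cut_not_chosen Q : valid_profile Q -> x \in cands Q -> y \in cands Q ->
  (0 < margin Q x y <= 2)%R -> leaving_margins_below Q A (margin Q x y) ->
  y \notin F Q.
Proof.
move=> vQ xQ yQ /andP[mxy_gt0 mxy_le2] below.
have xy : x != y by apply: contraTneq mxy_gt0 => ->; rewrite margin_xx.
apply: (F_CD vQ xQ yQ mxy_gt0) => -[s ys].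
have [u [v [uQ vQ' Au nAv uv]]] := majority_path_exit ys Ay nAx.
by move: uv; apply/negP; apply: no_majority_edge_leaving below u v uQ vQ' Au nAv.
Qed.

Lemma cut_voter_step Q i : valid_profile Q -> i \notin voters Q ->
  x \in cands Q -> y \in cands Q -> (2 < margin Q x y)%R ->
  leaving_margins_below Q A (margin Q x y) ->
  let Q' := add_voter Q i (cut_ballot Q A y) in
  margin Q' x y = (margin Q x y - 1)%R /\ leaving_margins_below Q' A (margin Q' x y).
Proof.
move=> vQ iQ xQ yQ mxy_gt2 below Q'.
have nyx : ~~ maj_pref Q y x by rewrite /maj_pref marginC; lia.
have mxy : margin Q' x y = (margin Q x y - 1)%R.
  by rewrite [LHS]marginC margin_cut_ballot // eqxx nyx (marginC Q x y) /=; lia.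
split=> // a c aQ cQ Aa nAc; rewrite mxy margin_cut_ballot //.
have := below a c aQ cQ Aa nAc.
case: ifP => [/andP[/eqP-> nyc] | _]; last by lia.
by move: nyc; rewrite /maj_pref -leNgt; lia.
Qed.

Lemma cut_forces_rejection Q : valid_profile Q -> x \in cands Q -> y \in cands Q ->
  (0 < margin Q x y)%R -> leaving_margins_below Q A (margin Q x y) -> y \notin F Q.
Proof.
move=> vQ xQ yQ mxy_gt0.
have [n mxy] : exists n : nat, margin Q x y = Posz n by exists `|margin Q x y|%N; lia.
elim: n Q mxy vQ xQ yQ mxy_gt0 => [|n IH] Q mxy vQ xQ yQ mxy_gt0 below; first lia.
have [mxy_le2|mxy_gt2] := lerP (margin Q x y) 2.
  by apply: cut_not_chosen => //; rewrite mxy_gt0 mxy_le2.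
have [i iQ] := exists_fresh_voter (voters Q).
have [mxy' below'] := cut_voter_step vQ iQ xQ yQ mxy_gt2 below.
have vQ' := valid_add_voter i vQ (perm_cut_ballot Q A y).
apply: contraNN (IH _ _ vQ' xQ yQ _ below') => [yFQ||]; last 2 first.
- by rewrite mxy' mxy; lia.
- by rewrite mxy'; lia.
apply: F_TPI => //; first exact: perm_cut_ballot.
by move=> z zQ zy; exact: cut_ballot_tolerant.
Qed.

End Involvement.

Theorem theorem6p5 (F : profile -> {fset nat}) :
  VSCC F -> coherent_defeat F -> tolerant_positive_involvement F ->
  forall P, valid_profile P -> forall y, y \in F P -> in_SC P y.
Proof.
move=> F_VSCC F_CD F_TPI P vP y yF.
have yP : y \in cands P by have [_ /fsubsetP] := F_VSCC P vP; apply.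
split=> // -[x [mxy_gt0 weak_paths]].
pose A c := `[< strongly_reaches P (margin P x y) y c >].
have Ay : A y by apply/asboolP; left.
have nAx : ~~ A x.
  apply/asboolPn => -[xy | [s [ys strong]]].
    by rewrite xy margin_xx ltxx in mxy_gt0.
  by have := weak_paths s ys; rewrite ltNge strong.
have below : leaving_margins_below P A (margin P x y).
  move=> a c _ cP /asboolP Aa /asboolPn nAc; rewrite ltNge; apply/negP => strong.
  exact/nAc/(strongly_reaches_step mxy_gt0 yP Aa cP strong).
have xP := margin_gt0_cand vP mxy_gt0.
have := cut_forces_rejection F_CD F_TPI Ay nAx vP xP yP mxy_gt0 below.
by rewrite yF.
Qed.
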